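(* Let $q\in\,]0,1[$, $\omega\ge0$, let $I$ be an interval containing $\omega_0:=\omega/(1-q)$, $a,b\in I$ with $a<b$, $\alpha,\beta\in\mathbb{R}$, and $L:I\times\mathbb{R}\times\mathbb{R}\to\mathbb{R}$. Let $\eta$ be an admissible variation and $y$ an admissible function, and set $$g(t,\epsilon):=L\bigl(t,\,y(\sigma(t))+\epsilon\eta(\sigma(t)),\,\tilde D_{q,\omega}[y](t)+\epsilon\tilde D_{q,\omega}[\eta](t)\bigr).$$ Assume that (1) $g(t,\cdot)$ is differentiable at $0$ uniformly in $[a,b]_{q,\omega}$; (2) $\mathcal{L}_\xi(y+\epsilon\eta):=\int_{\omega_0}^{\xi}g(t,\epsilon)\,\tilde d_{q,\omega}t$, $\xi\in\{a,b\}$, exist for $\epsilon$ near $0$; (3) $\int_{\omega_0}^a\partial_2 g(t,0)\,\tilde d_{q,\omega}t$ and $\int_{\omega_0}^b\partial_2 g(t,0)\,\tilde d_{q,\omega}t$ exist. Then $\phi(\epsilon):=\mathcal{L}(y+\epsilon\eta)$ is differentiable at $0$ and $$\phi'(0)=\int_a^b\Bigl[\partial_2L\bigl(t,y(\sigma(t)),\tilde D_{q,\omega}[y](t)\bigr)\eta(\sigma(t))+\partial_3L\bigl(t,y(\sigma(t)),\tilde D_{q,\omega}[y](t)\bigr)\tilde D_{q,\omega}[\eta](t)\Bigr]\tilde d_{q,\omega}t.$$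
   Context: $\sigma(t):=qt+\omega$, $\sigma^{-1}(t):=q^{-1}(t-\omega)$, $\sigma^k$ the $k$-fold composition. Hahn symmetric derivative: for $t\neq\omega_0$, $\tilde D_{q,\omega}[f](t):=\frac{f(\sigma(t))-f(\sigma^{-1}(t))}{\sigma(t)-\sigma^{-1}(t)}$; $\tilde D_{q,\omega}[f](\omega_0):=f'(\omega_0)$ (classical). Hahn symmetric integral: $\int_{\omega_0}^x F\,\tilde d_{q,\omega}t:=(\sigma^{-1}(x)-\sigma(x))\sum_{n\ge0}q^{2n+1}F(\sigma^{2n+1}(x))$, $\int_a^bF\,\tilde d_{q,\omega}t:=\int_{\omega_0}^bF\,\tilde d_{q,\omega}t-\int_{\omega_0}^aF\,\tilde d_{q,\omega}t$. $[s]_{q,\omega}:=\{\sigma^{2n+1}(s):n\in\mathbb{N}_0\}\cup\{\omega_0\}$, $[a,b]_{q,\omega}:=[a]_{q,\omega}\cup[b]_{q,\omega}$. $\mathcal{Y}^1([a,b]_{q,\omega},\mathbb{R})$: functions $y:I\to\mathbb{R}$ such that $y$ and $\tilde D_{q,\omega}[y]$ are bounded on $[a,b]_{q,\omega}$ and continuous at $\omega_0$. $\mathcal{L}(y):=\int_a^bL(t,y(\sigma(t)),\tilde D_{q,\omega}[y](t))\,\tilde d_{q,\omega}t$. An admissible function is $y\in\mathcal{Y}^1([a,b]_{q,\omega},\mathbb{R})$ with $y(a)=\alpha$, $y(b)=\beta$; an admissible variation is $\eta\in\mathcal{Y}^1([a,b]_{q,\omega},\mathbb{R})$ with $\eta(a)=\eta(b)=0$.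 ''$g(t,\cdot)$ differentiable at $0$ uniformly in $[a,b]_{q,\omega}$'' means: for every $\varepsilon>0$ there is $\delta>0$ with $\left|\frac{g(t,\epsilon)-g(t,0)}{\epsilon}-\partial_2g(t,0)\right|<\varepsilon$ for all $0<|\epsilon|<\delta$ and all $t\in[a,b]_{q,\omega}$. $\partial_jL$ is the partial derivative of $L$ in its $j$-th argument. *)

From Stdlib Require Import Reals ClassicalEpsilon.
From Coquelicot Require Import Coquelicot.
Open Scope R_scope.

Definition sig (q w t : R) : R := q * t + w.
Definition siginv (q w t : R) : R := (t - w) / q.
Fixpoint sigk (q w : R) (k : nat) (t : R) : R :=
  match k with O => t | S k' => sig q w (sigk q w k' t) end.
Definition om0 (q w : R) : R := w / (1 - q).

Definition is_interval (I : R -> Prop) : Prop :=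
  forall x y z, I x -> I z -> x <= y <= z -> I y.

Definition derive_within (I : R -> Prop) (f : R -> R) (x l : R) : Prop :=
  forall eps, 0 < eps -> exists delta, 0 < delta /\
    forall h, I h -> h <> x -> Rabs (h - x) < delta ->
      Rabs ((f h - f x) / (h - x) - l) < eps.

Definition cont_within (I : R -> Prop) (f : R -> R) (x : R) : Prop :=
  forall eps, 0 < eps -> exists delta, 0 < delta /\
    forall h, I h -> Rabs (h - x) < delta -> Rabs (f h - f x) < eps.

(* Hahn symmetric derivative; at omega0 it is the classical derivative f'(omega0)
   (chosen by epsilon; meaningful when it exists, which Y1 requires) *)
Definition hahnD (I : R -> Prop) (q w : R) (f : R -> R) (t : R) : R :=
  if Req_EM_T t (om0 q w)
  then epsilon (inhabits 0) (fun l => derive_within I f t l)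
  else (f (sig q w t) - f (siginv q w t)) / (sig q w t - siginv q w t).

(* terms of the series defining the Hahn symmetric integral from omega0 to x *)
Definition hterms (q w : R) (F : R -> R) (x : R) (n : nat) : R :=
  q ^ (2 * n + 1) * F (sigk q w (2 * n + 1) x).

Definition hint0_exists (q w : R) (F : R -> R) (x : R) : Prop :=
  ex_series (hterms q w F x).

Definition hint0 (q w : R) (F : R -> R) (x : R) : R :=
  (siginv q w x - sig q w x) * Series (hterms q w F x).

Definition hint (q w : R) (F : R -> R) (a b : R) : R :=
  hint0 q w F b - hint0 q w F a.

Definition in_qw (q w s t : R) : Prop :=
  (exists n : nat, t = sigk q w (2 * n + 1) s) \/ t = om0 q w.
Definition in_qw_ab (q w a b t : R) : Prop := in_qw q w a t \/ in_qw q w b t.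

Definition bounded_on (P : R -> Prop) (f : R -> R) : Prop :=
  exists M, forall t, P t -> Rabs (f t) <= M.

Definition Y1 (I : R -> Prop) (q w a b : R) (y : R -> R) : Prop :=
  (exists l, derive_within I y (om0 q w) l) /\
  bounded_on (in_qw_ab q w a b) y /\
  bounded_on (in_qw_ab q w a b) (hahnD I q w y) /\
  cont_within I y (om0 q w) /\
  cont_within I (hahnD I q w y) (om0 q w).

Definition calL (I : R -> Prop) (q w : R) (L : R -> R -> R -> R) (y : R -> R)
  (a b : R) : R :=
  hint q w (fun t => L t (y (sig q w t)) (hahnD I q w y t)) a b.

Definition L_diff_at (L : R -> R -> R -> R) (t u v : R) : Prop :=
  forall eps, 0 < eps -> exists delta, 0 < delta /\
    forall h k, Rabs h < delta -> Rabs k < delta ->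
      Rabs (L t (u + h) (v + k) - L t u v
            - Derive (fun u' => L t u' v) u * h
            - Derive (fun v' => L t u v') v * k) <= eps * (Rabs h + Rabs k).

(* The variation is e |-> hint (g(., e)) a b, and each of the two integrals from
   omega0 is a constant times a series whose terms q^(2n+1) g(sigma^(2n+1) x, e)
   are weighted by a summable geometric sequence.  Uniform differentiability of
   g(t,.) on [a,b]_{q,omega} therefore passes through the series, and the chain
   rule identifies d/de g(t,e) at 0 with the integrand of the claimed formula.
   Linearity of the Hahn derivative (at omega0 it is a classical derivative,
   which is unique because I is a nondegenerate interval around omega0) turns
   calL (y + e eta) into hint (g(., e)). *)
From Stdlib Require Import Reals ClassicalEpsilon Lra FunctionalExtensionality.
From Coquelicot Require Import Coquelicot.
Open Scope R_scope.

Lemma interval_point_near (I : R -> Prop) (x a b : R) :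
  is_interval I -> I x -> I a -> I b -> a < b ->
  forall d, 0 < d -> exists h, I h /\ h <> x /\ Rabs (h - x) < d.
Proof.
  intros HI Hx Ha Hb Hab d Hd.
  destruct (Rlt_le_dec x b) as [Hxb | Hbx].
  - set (r := Rmin (d / 2) (b - x)).
    assert (Hr : 0 < r) by (apply Rmin_pos; lra).
    assert (r <= d / 2) by apply Rmin_l.
    assert (r <= b - x) by apply Rmin_r.
    exists (x + r). split; [apply (HI x _ b); auto; lra | split; [lra |]].
    rewrite Rabs_right; lra.
  - set (r := Rmin (d / 2) (x - a)).
    assert (Hr : 0 < r) by (apply Rmin_pos; lra).
    assert (r <= d / 2) by apply Rmin_l.
    assert (r <= x - a) by apply Rmin_r.
    exists (x - r). split; [apply (HI a _ x); auto; lra | split; [lra |]].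
    rewrite Rabs_left; lra.
Qed.

Lemma derive_within_unique (I : R -> Prop) (f : R -> R) (x l1 l2 : R) :
  (forall d, 0 < d -> exists h, I h /\ h <> x /\ Rabs (h - x) < d) ->
  derive_within I f x l1 -> derive_within I f x l2 -> l1 = l2.
Proof.
  intros Hnear H1 H2.
  destruct (Req_dec l1 l2) as [E | N]; [exact E | exfalso].
  set (r := Rabs (l1 - l2) / 2).
  assert (Hr : 0 < r) by (apply Rdiv_lt_0_compat; [apply Rabs_pos_lt | ]; lra).
  destruct (H1 r Hr) as [d1 [Hd1 K1]].
  destruct (H2 r Hr) as [d2 [Hd2 K2]].
  destruct (Hnear (Rmin d1 d2)) as [h [Ih [hx hd]]]; [apply Rmin_pos; lra |].
  assert (A1 := K1 h Ih hx (Rlt_le_trans _ _ _ hd (Rmin_l _ _))).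
  assert (A2 := K2 h Ih hx (Rlt_le_trans _ _ _ hd (Rmin_r _ _))).
  set (Q := (f h - f x) / (h - x)) in *.
  assert (Rabs (l1 - l2) <= Rabs (Q - l1) + Rabs (Q - l2)).
  { replace (l1 - l2) with (- (Q - l1) + (Q - l2)) by ring.
    rewrite <- (Rabs_Ropp (Q - l1)). apply Rabs_triang. }
  unfold r in *. lra.
Qed.

Lemma derive_within_lin_comb (I : R -> Prop) (f g : R -> R) (x l1 l2 e : R) :
  derive_within I f x l1 -> derive_within I g x l2 ->
  derive_within I (fun t => f t + e * g t) x (l1 + e * l2).
Proof.
  intros H1 H2 eps Heps.
  set (r := eps / (2 * (Rabs e + 1))).
  assert (Habs := Rabs_pos e).
  assert (Hr : 0 < r) by (apply Rdiv_lt_0_compat; lra).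
  assert (Hsum : r + Rabs e * r = eps / 2) by (unfold r; field; lra).
  destruct (H1 r Hr) as [d1 [Hd1 K1]].
  destruct (H2 r Hr) as [d2 [Hd2 K2]].
  exists (Rmin d1 d2). split; [apply Rmin_pos; lra |].
  intros h Ih hx hd.
  assert (A1 := K1 h Ih hx (Rlt_le_trans _ _ _ hd (Rmin_l _ _))).
  assert (A2 := K2 h Ih hx (Rlt_le_trans _ _ _ hd (Rmin_r _ _))).
  replace ((f h + e * g h - (f x + e * g x)) / (h - x) - (l1 + e * l2))
    with (((f h - f x) / (h - x) - l1) + e * ((g h - g x) / (h - x) - l2))
    by (field; lra).
  eapply Rle_lt_trans; [apply Rabs_triang |]. rewrite Rabs_mult.
  assert (Rabs e * Rabs ((g h - g x) / (h - x) - l2) <= Rabs e * r)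
    by (apply Rmult_le_compat_l; lra).
  lra.
Qed.

Lemma hahnD_lin_comb (I : R -> Prop) (q w a b : R) (f g : R -> R) (e t : R) :
  is_interval I -> I (om0 q w) -> I a -> I b -> a < b ->
  (exists l, derive_within I f (om0 q w) l) ->
  (exists l, derive_within I g (om0 q w) l) ->
  hahnD I q w (fun s => f s + e * g s) t = hahnD I q w f t + e * hahnD I q w g t.
Proof.
  intros HI H0 Ha Hb Hab Ef Eg. unfold hahnD.
  destruct (Req_EM_T t (om0 q w)) as [-> | _]; [| unfold Rdiv; ring].
  assert (Df := epsilon_spec (inhabits 0) _ Ef).
  assert (Dg := epsilon_spec (inhabits 0) _ Eg).
  assert (Dfg := derive_within_lin_comb _ _ _ _ _ _ e Df Dg).
  apply (derive_within_unique I (fun s => f s + e * g s) (om0 q w));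
    [exact (interval_point_near I _ a b HI H0 Ha Hb Hab) | | exact Dfg].
  apply epsilon_spec. eexists. exact Dfg.
Qed.

Lemma L_diff_at_is_derive_line (L : R -> R -> R -> R) (t u v E F : R) :
  L_diff_at L t u v ->
  is_derive (fun e => L t (u + e * E) (v + e * F)) 0
    (Derive (fun u' => L t u' v) u * E + Derive (fun v' => L t u v') v * F).
Proof.
  intros HL. apply is_derive_Reals. intros eps Heps.
  set (Lu := Derive (fun u' => L t u' v) u).
  set (Lv := Derive (fun v' => L t u v') v).
  set (M := Rabs E + Rabs F + 1).
  assert (HE := Rabs_pos E). assert (HF := Rabs_pos F).
  assert (HM : 0 < M) by (unfold M; lra).
  assert (Hr : 0 < eps / (2 * M)) by (apply Rdiv_lt_0_compat; lra).
  destruct (HL _ Hr) as [d [Hd K]].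
  assert (Hd' : 0 < d / M) by (apply Rdiv_lt_0_compat; lra).
  exists (mkposreal _ Hd'). simpl. intros h hn hd.
  assert (Hh : 0 < Rabs h) by (apply Rabs_pos_lt; exact hn).
  assert (Hsmall : forall Z, Rabs Z < M -> Rabs (h * Z) < d).
  { intros Z HZ. rewrite Rabs_mult.
    apply Rle_lt_trans with (Rabs h * M); [apply Rmult_le_compat_l; lra |].
    apply (Rmult_lt_compat_r M) in hd; [| lra].
    replace (d / M * M) with d in hd by (field; lra). exact hd. }
  assert (Rem := K (h * E) (h * F) (Hsmall E ltac:(unfold M; lra))
                   (Hsmall F ltac:(unfold M; lra))).
  rewrite !Rabs_mult in Rem. fold Lu Lv in Rem.
  rewrite Rplus_0_l, !Rmult_0_l, !Rplus_0_r.
  replace ((L t (u + h * E) (v + h * F) - L t u v) / h - (Lu * E + Lv * F))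
    with ((L t (u + h * E) (v + h * F) - L t u v - Lu * (h * E) - Lv * (h * F)) / h)
    by (field; exact hn).
  rewrite Rabs_div by exact hn.
  apply (Rmult_lt_reg_r (Rabs h)); [exact Hh |].
  replace (_ / Rabs h * Rabs h) with
    (Rabs (L t (u + h * E) (v + h * F) - L t u v - Lu * (h * E) - Lv * (h * F)))
    by (field; lra).
  eapply Rle_lt_trans; [exact Rem |].
  replace (eps / (2 * M) * (Rabs h * Rabs E + Rabs h * Rabs F))
    with (eps * Rabs h * ((Rabs E + Rabs F) / (2 * M))) by (field; lra).
  assert ((Rabs E + Rabs F) / (2 * M) < 1)
    by (apply Rlt_div_l; unfold M; lra).
  assert (0 < eps * Rabs h) by (apply Rmult_lt_0_compat; lra).
  nra.
Qed.

Lemma is_series_abs_le_weighted (p u : nat -> R) (s c : R) :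
  ex_series p -> is_series u s -> (forall n, Rabs (u n) <= c * p n) ->
  Rabs s <= c * Series p.
Proof.
  intros Hp Hu Hle.
  assert (Hcp : ex_series (fun n => c * p n)) by (apply (ex_series_scal_l c p), Hp).
  assert (Habs : ex_series (fun n => Rabs (u n))).
  { refine (@ex_series_le R_AbsRing R_CompleteNormedModule _ _ _ Hcp). intros n.
    change (Rabs (Rabs (u n)) <= c * p n). rewrite Rabs_Rabsolu. apply Hle. }
  rewrite <- (is_series_unique _ _ Hu), <- Series_scal_l.
  eapply Rle_trans; [apply Series_Rabs, Habs |].
  apply Series_le; [| exact Hcp]. intros n. split; [apply Rabs_pos | apply Hle].
Qed.

Lemma is_derive_Series_weighted (p : nat -> R) (f : nat -> R -> R) (d : nat -> R) :
  (forall n, 0 <= p n) -> ex_series p ->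
  (forall eps, 0 < eps -> exists delta, 0 < delta /\
     forall e n, 0 < Rabs e < delta -> Rabs ((f n e - f n 0) / e - d n) < eps) ->
  (exists delta, 0 < delta /\
     forall e, Rabs e < delta -> ex_series (fun n => p n * f n e)) ->
  ex_series (fun n => p n * d n) ->
  is_derive (fun e => Series (fun n => p n * f n e)) 0 (Series (fun n => p n * d n)).
Proof.
  intros Hp Hps Hunif [d0 [Hd0 Hex]] Hexd.
  apply is_derive_Reals. intros eps Heps.
  set (K := Series p).
  assert (HK := Rle_abs K). assert (HK' := Rabs_pos K).
  set (r := eps / (2 * (Rabs K + 1))).
  assert (Hr : 0 < r) by (apply Rdiv_lt_0_compat; lra).
  assert (HrK : r * K < eps).
  { apply Rle_lt_trans with (r * Rabs K); [apply Rmult_le_compat_l; lra |].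
    apply Rle_lt_trans with (eps / 2); [| lra].
    unfold r. apply (Rmult_le_reg_r (2 * (Rabs K + 1))); [lra |].
    replace (eps / (2 * (Rabs K + 1)) * Rabs K * (2 * (Rabs K + 1)))
      with (eps * Rabs K) by (field; lra).
    nra. }
  destruct (Hunif r Hr) as [d1 [Hd1 K1]].
  assert (Hd : 0 < Rmin d0 d1) by (apply Rmin_pos; lra).
  exists (mkposreal _ Hd). simpl. intros h hn hd.
  rewrite Rplus_0_l.
  assert (Hh : 0 < Rabs h) by (apply Rabs_pos_lt; exact hn).
  assert (Sh := Series_correct _ (Hex h (Rlt_le_trans _ _ _ hd (Rmin_l _ _)))).
  assert (S0 := Series_correct _ (Hex 0 ltac:(rewrite Rabs_R0; lra))).
  assert (Sd := Series_correct _ Hexd).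
  assert (Hquot : is_series (fun n => p n * ((f n h - f n 0) / h - d n))
    ((Series (fun n => p n * f n h) - Series (fun n => p n * f n 0)) / h
     - Series (fun n => p n * d n))).
  { eapply is_series_ext;
      [| apply (is_series_minus _ _ _ _ (is_series_scal_r (/ h) _ _
                  (is_series_minus _ _ _ _ Sh S0)) Sd)].
    intros n. simpl. unfold plus, opp; simpl. field. exact hn. }
  eapply Rle_lt_trans; [apply (is_series_abs_le_weighted p _ _ r Hps Hquot) | exact HrK].
  intros n. rewrite Rabs_mult, Rabs_right by (apply Rle_ge, Hp).
  rewrite Rmult_comm. apply Rmult_le_compat_r; [apply Hp |].
  left. apply K1. split; [exact Hh | exact (Rlt_le_trans _ _ _ hd (Rmin_r _ _))].
Qed.

Lemma ex_series_odd_pow (q : R) : 0 < q < 1 -> ex_series (fun n : nat => q ^ (2 * n + 1)).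
Proof.
  intros Hq.
  apply ex_series_ext with (fun n => (q ^ 2) ^ n * q).
  { intros n. rewrite pow_add, pow_mult, pow_1. reflexivity. }
  apply ex_series_scal_r. exists (/ (1 - q ^ 2)). apply is_series_geom.
  rewrite Rabs_right by (apply Rle_ge, pow_le; lra).
  simpl. nra.
Qed.

Lemma is_derive_hint0 (q w x : R) (P : R -> Prop) (G : R -> R -> R) (D : R -> R) :
  0 < q < 1 -> (forall n, P (sigk q w (2 * n + 1) x)) ->
  (forall eps, 0 < eps -> exists delta, 0 < delta /\
     forall e t, 0 < Rabs e < delta -> P t -> Rabs ((G t e - G t 0) / e - D t) < eps) ->
  (exists delta, 0 < delta /\
     forall e, Rabs e < delta -> hint0_exists q w (fun t => G t e) x) ->
  hint0_exists q w D x ->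
  is_derive (fun e => hint0 q w (fun t => G t e) x) 0 (hint0 q w D x).
Proof.
  intros Hq HP Hunif Hex HexD. unfold hint0.
  apply is_derive_scal.
  apply (is_derive_Series_weighted (fun n => q ^ (2 * n + 1))
           (fun n e => G (sigk q w (2 * n + 1) x) e));
    [intros n; apply pow_le; lra | apply ex_series_odd_pow, Hq | | exact Hex | exact HexD].
  intros eps Heps. destruct (Hunif eps Heps) as [delta [Hdelta K]].
  exists delta. split; [exact Hdelta |]. intros e n He. apply K, HP; exact He.
Qed.

Lemma hint0_ext_orbit (q w x : R) (F G : R -> R) :
  (forall n, F (sigk q w (2 * n + 1) x) = G (sigk q w (2 * n + 1) x)) ->
  hint0 q w F x = hint0 q w G x.
Proof.
  intros HFG. unfold hint0. f_equal. apply Series_ext. intros n.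
  unfold hterms. rewrite HFG. reflexivity.
Qed.

Theorem lemma3p7 (q w : R) (I : R -> Prop) (a b alpha beta : R)
  (L : R -> R -> R -> R) (y eta : R -> R) :
  0 < q < 1 -> 0 <= w -> is_interval I -> I (om0 q w) -> I a -> I b -> a < b ->
  Y1 I q w a b y -> y a = alpha -> y b = beta ->
  Y1 I q w a b eta -> eta a = 0 -> eta b = 0 ->
  (forall t, in_qw_ab q w a b t ->
     L_diff_at L t (y (sig q w t)) (hahnD I q w y t)) ->
  let g := fun t e => L t (y (sig q w t) + e * eta (sig q w t))
                          (hahnD I q w y t + e * hahnD I q w eta t) in
  (* (1) g(t,.) differentiable at 0 uniformly in [a,b]_{q,w} *)
  (forall eps, 0 < eps -> exists delta, 0 < delta /\
     forall e t, 0 < Rabs e < delta -> in_qw_ab q w a b t ->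
       Rabs ((g t e - g t 0) / e - Derive (fun e' => g t e') 0) < eps) ->
  (* (2) L_xi(y + e eta), xi in {a,b}, exist for e near 0 *)
  (exists delta, 0 < delta /\ forall e, Rabs e < delta ->
     hint0_exists q w (fun t => g t e) a /\ hint0_exists q w (fun t => g t e) b) ->
  (* (3) *)
  hint0_exists q w (fun t => Derive (fun e' => g t e') 0) a ->
  hint0_exists q w (fun t => Derive (fun e' => g t e') 0) b ->
  is_derive (fun e => calL I q w L (fun t => y t + e * eta t) a b) 0
    (hint q w (fun t =>
        Derive (fun u => L t u (hahnD I q w y t)) (y (sig q w t)) * eta (sig q w t)
      + Derive (fun v => L t (y (sig q w t)) v) (hahnD I q w y t) * hahnD I q w eta t)
      a b).
Proof.
  intros Hq _ HI H0 Ha Hb Hab [Dy _] _ _ [Deta _] _ _ HL g Hunif [d [Hd Hex]] HexDa HexDb.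
  set (D := fun t => Derive (fun e' => g t e') 0) in *.
  assert (Horbit : forall x n, x = a \/ x = b -> in_qw_ab q w a b (sigk q w (2 * n + 1) x)).
  { intros x n [-> | ->]; [left | right]; left; exists n; reflexivity. }
  assert (Hintegrand : forall x, x = a \/ x = b ->
    hint0 q w (fun t =>
        Derive (fun u => L t u (hahnD I q w y t)) (y (sig q w t)) * eta (sig q w t)
      + Derive (fun v => L t (y (sig q w t)) v) (hahnD I q w y t) * hahnD I q w eta t) x
    = hint0 q w D x).
  { intros x Hx. apply hint0_ext_orbit. intros n. symmetry.
    apply is_derive_unique, L_diff_at_is_derive_line, HL, Horbit, Hx. }
  unfold hint. rewrite (Hintegrand a (or_introl eq_refl)), (Hintegrand b (or_intror eq_refl)).
  apply is_derive_ext with (fun e => hint q w (fun t => g t e) a b).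
  { intros e. unfold calL. f_equal. apply functional_extensionality. intros t.
    unfold g. rewrite (hahnD_lin_comb I q w a b y eta e t HI H0 Ha Hb Hab Dy Deta).
    reflexivity. }
  apply (is_derive_minus (fun e => hint0 q w (fun t => g t e) b)
                         (fun e => hint0 q w (fun t => g t e) a));
    apply (is_derive_hint0 q w _ (in_qw_ab q w a b)); auto;
    exists d; split; auto; intros e He; apply Hex, He.
Qed.
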